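(* Let $p\in\{1,\infty\}$, let $f:\mathbb{R}^n\to\mathbb{R}^n$ be a Lipschitz, differentiable vector field, and let $W\in\mathbb{R}^{n\times n}$ be invertible. Then $f$ is WIC with respect to the weighted norm $x\mapsto \|Wx\|_p$ if and only if there exist $\gamma\ge 0$ and a differentiable Lipschitz map $\phi:\mathbb{R}^n\to\mathbb{R}^n$ with $\|\phi\|_{\mathrm{Lip},p}\le\gamma$ such that \[ f(x) = -\gamma x + W^{-1}\phi(Wx)\quad\text{for all } x\in\mathbb{R}^n. \]
   Context: For $x\in\mathbb{R}^n$, $\|x\|_1=\sum_i|x_i|$ and $\|x\|_\infty=\max_i|x_i|$, with induced matrix norms $\|A\|_p=\sup_{x\neq0}\|Ax\|_p/\|x\|_p$. For a norm $\|\cdot\|$ on $\mathbb{R}^n$ with induced matrix norm also denoted $\|\cdot\|$, the matrix measure of $A$ is $\mu(A)=\lim_{h\to0^+}\frac{\|I+hA\|-1}{h}$; for the weighted norm $\|Wx\|_p$ this equals $\mu_p(WAW^{-1})$, where $\mu_1(B)=\max_j\big(b_{jj}+\sum_{i\ne j}|b_{ij}|\big)$ and $\mu_\infty(B)=\max_i\big(b_{ii}+\sum_{j\ne i}|b_{ij}|\big)$. $Df(x)$ is the Jacobian of $f$ at $x$. A vector field $f$ is weakly infinitesimally contracting (WIC) with respect to a norm if $\sup_{x\in\mathbb{R}^n}\mu(Df(x))\le 0$ for the associated matrix measure $\mu$. For differentiable $\phi$, $\|\phi\|_{\mathrm{Lip},p}=\sup_{x}\|D\phi(x)\|_p$. 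*)

From HB Require Import structures.
From mathcomp Require Import all_boot all_order all_algebra.
From mathcomp Require Import all_classical all_reals all_analysis.
Set Implicit Arguments. Unset Strict Implicit. Unset Printing Implicit Defensive.
Import Order.TTheory GRing.Theory Num.Theory.
Import numFieldNormedType.Exports.
Local Open Scope classical_set_scope.
Local Open Scope ring_scope.

Inductive pexp := P1 | Pinf.

Definition vnorm (R : realType) (n : nat) (p : pexp) (x : 'cV[R]_n) : R :=
  match p with
  | P1 => \sum_(i < n) `|x i 0|
  | Pinf => \big[Num.max/0]_(i < n) `|x i 0|
  end.

Definition ind_norm (R : realType) (n : nat) (p : pexp) (A : 'M[R]_n) : R :=
  sup [set vnorm p (A *m x) / vnorm p x | x in [set x : 'cV[R]_n | x != 0]].

Definition mu (R : realType) (n : nat) (p : pexp) (B : 'M[R]_n) : R :=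
  match p with
  | P1 => sup [set B j j + \sum_(i < n | i != j) `|B i j| | j in [set: 'I_n]]
  | Pinf => sup [set B i i + \sum_(j < n | j != i) `|B i j| | i in [set: 'I_n]]
  end.

Definition jac (R : realType) (n : nat) (f : 'cV[R]_n -> 'cV[R]_n) (x : 'cV[R]_n)
  : 'M[R]_n := \matrix_(i, j) ('d f x (delta_mx j 0 : 'cV[R]_n)) i 0.

(* Lipschitz (w.r.t. the canonical sup-norm on 'cV[R]_n; all norms are equivalent) *)
Definition lipschitz_map (R : realType) (n : nat) (f : 'cV[R]_n -> 'cV[R]_n) : Prop :=
  exists L : R, forall x y, `|f x - f y| <= L * `|x - y|.

(* matrix measure of A w.r.t. the weighted norm x |-> ||W x||_p *)
Definition wmu (R : realType) (n : nat) (p : pexp) (W A : 'M[R]_n) : R :=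
  mu p (W *m A *m invmx W).

Definition WIC (R : realType) (n : nat) (p : pexp) (W : 'M[R]_n)
  (f : 'cV[R]_n -> 'cV[R]_n) : Prop :=
  forall x, wmu p W (jac f x) <= 0.

(* ||phi||_{Lip,p} = sup_x ||D phi(x)||_p ; "<= gamma" unfolds to a bound at every x *)
Definition lip_norm_le (R : realType) (n : nat) (p : pexp)
  (phi : 'cV[R]_n -> 'cV[R]_n) (gamma : R) : Prop :=
  forall x, ind_norm p (jac phi x) <= gamma.

From HB Require Import structures.
From mathcomp Require Import all_boot all_order all_algebra.
From mathcomp Require Import all_classical all_reals all_analysis.
From mathcomp Require Import lra.
Import Order.TTheory GRing.Theory Num.Theory.
Import numFieldNormedType.Exports.
Set Implicit Arguments. Unset Strict Implicit. Unset Printing Implicit Defensive.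
Local Open Scope ring_scope.

(* Conjugating by W reduces the weighted norm to the plain p-norm.  For p in
   {1, oo}, mu_p(B) and ||B||_p are the largest column (p = 1) or row (p = oo)
   values of B_jj + sum_{i <> j} |B_ij| and |B_jj| + sum_{i <> j} |B_ij|; these
   agree when B_jj >= 0.  If A := W Df W^-1 has mu_p(A) <= 0 and gamma >= |A_jj|
   everywhere (such a gamma exists because f is Lipschitz), then
   phi(y) := gamma y + W f(W^-1 y) has Jacobian gamma I + A, whose diagonal is
   nonnegative, hence ||gamma I + A||_p = gamma + mu_p(A) <= gamma.  Conversely,
   for f = -gamma id + W^-1 phi W we get
   mu_p(W Df W^-1) = mu_p(D phi) - gamma <= ||D phi||_p - gamma <= 0. *)

Section MaxEntryNorm.
Variable R : realDomainType.

Lemma mx_norm_entry_le m k (A : 'M[R]_(m, k)) i j : `|A i j| <= `|A|.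
Proof.
rewrite -[`|A|]/(mx_norm A) mx_normrE.
exact: (le_bigmax _ (fun ij : 'I_m * 'I_k => `|A ij.1 ij.2|) (i, j)).
Qed.

Lemma mx_norm_le_entries m k (A : 'M[R]_(m, k)) c :
  0 <= c -> (forall i j, `|A i j| <= c) -> `|A| <= c.
Proof.
move=> c0 Ac; rewrite -[`|A|]/(mx_norm A) mx_normrE.
by apply: bigmax_le => // -[i j] _; exact: Ac.
Qed.

Lemma mx_norm_mulmx_le m n k (A : 'M[R]_(m, n)) (B : 'M[R]_(n, k)) :
  `|A *m B| <= n%:R * `|A| * `|B|.
Proof.
apply: mx_norm_le_entries => [|i j]; first by rewrite !mulr_ge0.
rewrite mxE (le_trans (ler_norm_sum _ _ _)) //.
apply: le_trans (_ : \sum_(l < n) `|A| * `|B| <= _).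
  by apply: ler_sum => l _; rewrite normrM ler_pM // mx_norm_entry_le.
by rewrite sumr_const card_ord -mulrA mulr_natl.
Qed.

End MaxEntryNorm.

Lemma ge0_ge_sup (R : realType) (E : set R) c : 0 <= c -> ubound E c -> sup E <= c.
Proof.
move=> c0 Ec; have [->|/set0P E0] := eqVneq E set0; first by rewrite sup0.
exact: ge_sup.
Qed.

Section InducedNorm.
Variables (R : realType) (n : nat).
Implicit Types (p : pexp) (B : 'M[R]_n) (x : 'cV[R]_n).

Definition abs_line_sum p B j : R :=
  match p with
  | P1 => \sum_i `|B i j|
  | Pinf => \sum_k `|B j k|
  end.

Lemma abs_line_sum_ge0 p B j : 0 <= abs_line_sum p B j.
Proof. by case: p; apply: sumr_ge0. Qed.

Lemma vnorm_ge0 p x : 0 <= vnorm p x.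
Proof.
case: p => /=; first exact: sumr_ge0.
by apply: (big_ind (fun y => 0 <= y)) => // a b; rewrite le_max => ->.
Qed.

Lemma vnorm_entry_le p x i : `|x i 0| <= vnorm p x.
Proof.
case: p => /=; first by rewrite (bigD1 i) //= lerDl sumr_ge0.
exact: (le_bigmax _ (fun i => `|x i 0|) i).
Qed.

Lemma vnorm0 p : vnorm p (0 : 'cV[R]_n) = 0.
Proof.
apply/eqP; rewrite eq_le vnorm_ge0 andbT.
case: p => /=; last by apply: bigmax_le => // i _; rewrite mxE normr0.
by rewrite big1 // => i _; rewrite mxE normr0.
Qed.

Lemma vnorm_gt0 p x : x != 0 -> 0 < vnorm p x.
Proof.
move=> x0; rewrite lt_def vnorm_ge0 andbT; apply: contraNneq x0 => vx0.
apply/eqP/matrixP => i j; rewrite (ord1 j) mxE; apply/normr0_eq0/eqP.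
by rewrite eq_le normr_ge0 andbT -vx0 vnorm_entry_le.
Qed.

Lemma vnorm_mulmx_le p B x c : 0 <= c -> (forall j, abs_line_sum p B j <= c) ->
  vnorm p (B *m x) <= c * vnorm p x.
Proof.
case: p => /= c0 Bc.
  apply: le_trans (_ : \sum_i \sum_j `|B i j| * `|x j 0| <= _).
    apply: ler_sum => i _; rewrite mxE (le_trans (ler_norm_sum _ _ _)) //.
    by apply: ler_sum => j _; rewrite normrM.
  rewrite exchange_big /= mulr_sumr; apply: ler_sum => j _.
  by rewrite -mulr_suml ler_wpM2r.
apply: bigmax_le => [|i _]; first by rewrite mulr_ge0 // (vnorm_ge0 Pinf).
rewrite mxE (le_trans (ler_norm_sum _ _ _)) //.
apply: le_trans (_ : \sum_j `|B i j| * vnorm Pinf x <= _).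
  by apply: ler_sum => j _; rewrite normrM ler_wpM2l // (vnorm_entry_le Pinf).
by rewrite -mulr_suml ler_wpM2r // (vnorm_ge0 Pinf).
Qed.

Lemma ind_norm_le p B c : 0 <= c -> (forall j, abs_line_sum p B j <= c) ->
  ind_norm p B <= c.
Proof.
move=> c0 Bc; apply: ge0_ge_sup => // _ [x /= x0 <-].
by rewrite ler_pdivrMr ?vnorm_gt0 // vnorm_mulmx_le.
Qed.

Lemma vnorm_mulmx_le_ind_norm p B x : vnorm p x = 1 -> vnorm p (B *m x) <= ind_norm p B.
Proof.
move=> x1; rewrite -[vnorm _ (B *m x)]divr1 -x1; apply: ub_le_sup.
  exists (\sum_j abs_line_sum p B j) => _ [y /= y0 <-].
  rewrite ler_pdivrMr ?vnorm_gt0 // vnorm_mulmx_le // => [|j].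
    by apply: sumr_ge0 => j _; apply: abs_line_sum_ge0.
  by rewrite (bigD1 j) //= lerDl sumr_ge0 // => k _; apply: abs_line_sum_ge0.
by exists x => //=; apply: contra_eq_neq x1 => ->; rewrite vnorm0 eq_sym oner_neq0.
Qed.

Lemma abs_line_sum_le_ind_norm p B j : abs_line_sum p B j <= ind_norm p B.
Proof.
case: p.
  have e1 : vnorm P1 (delta_mx j 0 : 'cV[R]_n) = 1.
    rewrite /= (bigD1 j) //= big1 => [|i ij]; first by rewrite !mxE !eqxx normr1 addr0.
    by rewrite !mxE (negbTE ij) normr0.
  apply: (le_trans _ (vnorm_mulmx_le_ind_norm B e1)).
  by rewrite -colE /=; apply: ler_sum => i _; rewrite mxE.
(* For p = oo, the sign vector of row j realises the row sum. *)
pose s : 'cV[R]_n := \col_k (if B j k < 0 then -1 else 1).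
have s_unit k : `|s k 0| = 1 by rewrite mxE; case: ifP; rewrite ?normrN normr1.
have s1 : vnorm Pinf s = 1.
  apply/eqP; rewrite eq_le; apply/andP; split.
    by apply: bigmax_le => // k _; rewrite s_unit.
  by rewrite -(s_unit j) (vnorm_entry_le Pinf).
apply: (le_trans _ (vnorm_mulmx_le_ind_norm B s1)).
apply: (le_trans _ (vnorm_entry_le Pinf _ j)); rewrite mxE /=.
rewrite (le_trans _ (ler_norm _)) //; apply: ler_sum => k _.
rewrite mxE; case: ltrP => Bjk.
  by rewrite ltr0_norm // mulrN1.
by rewrite ger0_norm // mulr1.
Qed.

End InducedNorm.

Section MatrixMeasure.
Variables (R : realType) (n : nat).
Implicit Types (p : pexp) (A B : 'M[R]_n).

Definition offdiag_abs_sum p B j : R :=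
  match p with
  | P1 => \sum_(i < n | i != j) `|B i j|
  | Pinf => \sum_(k < n | k != j) `|B j k|
  end.

Definition mu_line p B j : R := B j j + offdiag_abs_sum p B j.

Lemma muE p B : mu p B = sup [set mu_line p B j | j in [set: 'I_n]]%classic.
Proof. by case: p. Qed.

Lemma abs_line_sumE p B j : abs_line_sum p B j = `|B j j| + offdiag_abs_sum p B j.
Proof. by case: p; rewrite /= (bigD1 j). Qed.

Lemma mu_line_le_abs_line_sum p B j : mu_line p B j <= abs_line_sum p B j.
Proof. by rewrite abs_line_sumE lerD2r ler_norm. Qed.

Lemma mu_line_shift p B c j : mu_line p (c%:M + B) j = c + mu_line p B j.
Proof.
rewrite /mu_line !mxE eqxx mulr1n -addrA; congr (_ + (_ + _)).
by case: p => /=; apply: eq_bigr => i ij;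
  rewrite !mxE ?[j == i]eq_sym (negbTE ij) mulr0n add0r.
Qed.

Lemma mu_line_le_mu p B j : mu_line p B j <= mu p B.
Proof.
rewrite muE; apply: ub_le_sup; last by exists j.
exists (\sum_k `|mu_line p B k|) => _ [k _ <-].
rewrite (le_trans (ler_norm _)) // (bigD1 k) //= lerDl.
exact: sumr_ge0.
Qed.

Lemma mu_le0 p B : (forall j, mu_line p B j <= 0) -> mu p B <= 0.
Proof. by move=> B0; rewrite muE; apply: ge0_ge_sup => // _ [j _ <-]. Qed.

Lemma ind_norm_shift_le p A c : 0 <= c -> mu p A <= 0 -> (forall j, - c <= A j j) ->
  ind_norm p (c%:M + A) <= c.
Proof.
move=> c0 muA diagA; apply: ind_norm_le => // j.
have -> : abs_line_sum p (c%:M + A) j = mu_line p (c%:M + A) j.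
  by rewrite abs_line_sumE ger0_norm // !mxE eqxx mulr1n; have := diagA j; lra.
by rewrite mu_line_shift; have := mu_line_le_mu p A j; lra.
Qed.

Lemma mu_shift_le0 p B c : ind_norm p B <= c -> mu p ((- c)%:M + B) <= 0.
Proof.
move=> Bc; apply: mu_le0 => j; rewrite mu_line_shift.
have := mu_line_le_abs_line_sum p B j; have := abs_line_sum_le_ind_norm p B j.
lra.
Qed.

End MatrixMeasure.

Section AffineConjugate.
Variables (R : realType) (n : nat).
Implicit Types (A B : 'M[R]_n) (f : 'cV[R]_n -> 'cV[R]_n).

Lemma mulmx_continuous m k (A : 'M[R]_(m, n)) :
  continuous (mulmx A : 'M[R]_(n, k) -> 'M[R]_(m, k)).
Proof.
apply: bounded_linear_continuous; apply/bounded_funP => r.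
exists (n%:R * `|A| * r) => x xr.
by rewrite (le_trans (mx_norm_mulmx_le _ _)) // ler_wpM2l // mulr_ge0.
Qed.

Lemma is_diff_mulmx A (y : 'cV[R]_n) :
  is_diff y (mulmx A : 'cV[R]_n -> 'cV[R]_n) (mulmx A).
Proof.
apply: DiffDef; first exact/linear_differentiable/mulmx_continuous.
by rewrite diff_lin //; exact: mulmx_continuous.
Qed.

Lemma is_diff_affine_conj A B c f y : differentiable f (B *m y) ->
  is_diff y (fun z => c *: z + A *m f (B *m z))
            (fun v => c *: v + A *m 'd f (B *m y) (B *m v)).
Proof.
move=> /differentiableP dfBy.
have dfB := is_diff_comp (is_diff_mulmx B y) dfBy.
exact: is_diffD (is_diff_scaler c y) (is_diff_comp dfB (is_diff_mulmx A _)).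
Qed.

Lemma differentiable_affine_conj A B c f y : differentiable f (B *m y) ->
  differentiable (fun z => c *: z + A *m f (B *m z)) y.
Proof. by move=> /(is_diff_affine_conj A c) []. Qed.

Lemma jacE f x v : 'd f x v = jac f x *m v.
Proof.
rewrite {1}(matrix_sum_delta v) linear_sum; apply/matrixP => i k.
rewrite (ord1 k) !mxE summxE; apply: eq_bigr => j _.
by rewrite big_ord1 linearZ /= !mxE mulrC.
Qed.

Lemma jac_eq f x M : (forall v, 'd f x v = M *m v) -> jac f x = M.
Proof. by move=> dfM; apply/matrixP => i j; rewrite mxE dfM -colE mxE. Qed.

Lemma jac_affine_conj A B c f y : differentiable f (B *m y) ->
  jac (fun z => c *: z + A *m f (B *m z)) y = c%:M + A *m jac f (B *m y) *m B.
Proof.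
move=> /(is_diff_affine_conj A c) dF; apply: jac_eq => v.
by rewrite diff_val /= jacE mulmxDl mul_scalar_mx !mulmxA.
Qed.

End AffineConjugate.

Section Lipschitz.
Variables (R : realType) (n : nat).
Implicit Types (A B : 'M[R]_n) (f : 'cV[R]_n -> 'cV[R]_n).

Lemma lipschitz_map_ge0 f : lipschitz_map f ->
  exists2 L, 0 <= L & forall x y, `|f x - f y| <= L * `|x - y|.
Proof.
move=> [L fL]; exists `|L| => // x y.
by rewrite (le_trans (fL x y)) // ler_wpM2r // ler_norm.
Qed.

Lemma lipschitz_map_affine_conj A B c f : lipschitz_map f ->
  lipschitz_map (fun z => c *: z + A *m f (B *m z)).
Proof.
move=> /lipschitz_map_ge0 [L L0 fL].
exists (`|c| + n%:R * `|A| * (L * (n%:R * `|B|))) => x y.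
rewrite opprD addrACA -scalerBr mulrDl.
apply: le_trans (ler_normD _ _) _; rewrite normrZ lerD2l -mulmxBr.
apply: le_trans (mx_norm_mulmx_le _ _) _; rewrite -[leRHS]mulrA.
apply: ler_wpM2l; first by rewrite mulr_ge0.
apply: le_trans (fL _ _) _; rewrite -mulmxBr -[leRHS]mulrA.
by apply: ler_wpM2l => //; exact: mx_norm_mulmx_le.
Qed.

Lemma diff_norm_le f L x v : (forall x y, `|f x - f y| <= L * `|x - y|) ->
  differentiable f x -> `|'d f x v| <= L * `|v|.
Proof.
move=> fL dfx; rewrite -deriveE // /derive -lim_norm; last exact: diff_derivable.
apply: limr_le; first by apply: is_cvg_norm; exact: diff_derivable.
near=> h; rewrite /= normrZ.
have h0 : h != 0 by near: h; exact: nbhs_dnbhs_neq.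
rewrite normfV ler_pdivrMl ?normr_gt0 //.
by apply: le_trans (fL _ _) _; rewrite addrK normrZ mulrCA.
Unshelve. all: by end_near. Qed.

Lemma mx_norm_jac_le f L x : 0 <= L ->
  (forall x y, `|f x - f y| <= L * `|x - y|) -> differentiable f x ->
  `|jac f x| <= L.
Proof.
move=> L0 fL dfx; apply: mx_norm_le_entries => // i j; rewrite mxE.
apply: le_trans (mx_norm_entry_le _ i 0) _.
apply: le_trans (diff_norm_le _ fL dfx) _; apply: ler_piMr => //.
by apply: mx_norm_le_entries => // k l; rewrite mxE; case: (_ && _);
  rewrite ?normr1 ?normr0.
Qed.

End Lipschitz.

Theorem mainTheorem2 (R : realType) (n : nat) (p : pexp)
  (f : 'cV[R]_n -> 'cV[R]_n) (W : 'M[R]_n) :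
  lipschitz_map f ->
  (forall x, differentiable f x) ->
  W \in unitmx ->
  (WIC p W f <->
   exists gamma : R, 0 <= gamma /\
     exists phi : 'cV[R]_n -> 'cV[R]_n,
       (forall x, differentiable phi x) /\ lipschitz_map phi /\
       lip_norm_le p phi gamma /\
       (forall x, f x = - gamma *: x + invmx W *m phi (W *m x))).
Proof.
move=> fL df Wu; split=> [wic | [g [_ [phi [dphi [_ [phi_le fE]]]]]] x].
- have [L L0 fL'] := lipschitz_map_ge0 fL.
  pose g := n%:R * (n%:R * `|W| * L) * `|invmx W|.
  have g0 : 0 <= g by rewrite !mulr_ge0.
  have diag_ge x j : - g <= (W *m jac f x *m invmx W) j j.
    suff : `|(W *m jac f x *m invmx W) j j| <= g by rewrite ler_norml => /andP[].
    apply: le_trans (mx_norm_entry_le _ j j) _.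
    apply: le_trans (mx_norm_mulmx_le _ _) _; apply: ler_wpM2r => //.
    apply: ler_wpM2l => //; apply: le_trans (mx_norm_mulmx_le _ _) _.
    by apply: ler_wpM2l; [rewrite mulr_ge0 | exact: mx_norm_jac_le].
  exists g; split=> //; exists (fun y => g *: y + W *m f (invmx W *m y)).
  split; [|split; [|split]].
  + by move=> y; apply: differentiable_affine_conj; exact: df.
  + exact: lipschitz_map_affine_conj.
  + move=> y; rewrite jac_affine_conj; last exact: df.
    exact: ind_norm_shift_le g0 (wic _) (diag_ge _).
  + move=> x; rewrite mulmxDr -scalemxAr !mulmxA mulVmx // !mul1mx.
    by rewrite scaleNr addKr.
- have -> : f = fun y => - g *: y + invmx W *m phi (W *m y) by exact/funext.
  rewrite /wmu jac_affine_conj; last exact: dphi.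
  have -> : W *m ((- g)%:M + invmx W *m jac phi (W *m x) *m W) *m invmx W
            = (- g)%:M + jac phi (W *m x).
    rewrite mulmxDr mulmxDl mul_mx_scalar -scalemxAl mulmxV // scalemx1.
    by rewrite !mulmxA mulmxV // mul1mx -mulmxA mulmxV // mulmx1.
  exact: mu_shift_le0 (phi_le _).
Qed.
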